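(* Let $K=1$ and fix a reflection matrix $\mathbf\Phi$ such that (SDR1.2) has an optimal solution. Then problem (P1.1) has an optimal solution $(\mathbf w_1,\mathbf R_0)$ whose dedicated sensing covariance lies in the null space of the user channel, i.e. $\mathbf h_1^H\mathbf R_0\mathbf h_1=0$.
   Context: Let $M,N\ge1$ be integers and $K=1$. Fixed data: $\mathbf G\in\mathbb C^{N\times M}$, $\mathbf h_{\mathrm d,1}\in\mathbb C^{M}$, $\mathbf h_{\mathrm r,1}\in\mathbb C^{N}$, threshold $\Gamma_1>0$, noise power $\sigma_1^2>0$, power budget $P_0>0$. A reflection matrix is $\mathbf\Phi=\mathrm{diag}(\mathbf v)$ with $\mathbf v\in\mathbb C^N$, $|v_n|=1$ for all $n$; put $\mathbf h_1=\mathbf h_{\mathrm d,1}+\mathbf G^H\mathbf\Phi^H\mathbf h_{\mathrm r,1}$ and $\mathbf H_1=\mathbf h_1\mathbf h_1^H$. The Type-I SINR is $\gamma_1^{\mathrm I}=|\mathbf h_1^H\mathbf w_1|^2/(\mathbf h_1^H\mathbf R_0\mathbf h_1+\sigma_1^2)$ for $\mathbf w_1\in\mathbb C^M$ and Hermitian $\mathbf R_0\succeq\mathbf 0$. For Hermitian $\mathbf X\succeq\mathbf 0$ define $f(\mathbf X)=\mathrm{tr}\big((\mathbf G\mathbf X\mathbf G^H)^{-1}\big)$ if $\mathbf G\mathbf X\mathbf G^H$ is invertible and $+\infty$ otherwise. Problem (P1.1): minimize $f(\mathbf w_1\mathbf w_1^H+\mathbf R_0)$ over $\mathbf w_1,\mathbf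 R_0\succeq\mathbf 0$ subject to $\gamma_1^{\mathrm I}\ge\Gamma_1$ and $\|\mathbf w_1\|^2+\mathrm{tr}(\mathbf R_0)\le P_0$. Problem (SDR1.2): minimize $f(\mathbf W_1+\mathbf R_0)$ over Hermitian $\mathbf W_1\succeq\mathbf 0,\mathbf R_0\succeq\mathbf 0$ subject to $(1+\tfrac1{\Gamma_1})\mathrm{tr}(\mathbf H_1\mathbf W_1)-\mathrm{tr}(\mathbf H_1(\mathbf W_1+\mathbf R_0))\ge\sigma_1^2$ and $\mathrm{tr}(\mathbf W_1)+\mathrm{tr}(\mathbf R_0)\le P_0$. *)

(* complex scalars modeled by an arbitrary
   numClosedFieldType C (e.g. complex numbers over a realType). *)
From HB Require Import structures.
From mathcomp Require Import all_boot all_order all_algebra.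
Set Implicit Arguments. Unset Strict Implicit. Unset Printing Implicit Defensive.
Import Order.TTheory GRing.Theory Num.Theory.
Local Open Scope ring_scope.

Section Defs.
Variable C : numClosedFieldType.

Definition ctr m n (A : 'M[C]_(m, n)) : 'M[C]_(n, m) := (map_mx Num.conj A)^T.

Definition psd n (A : 'M[C]_n) : Prop :=
  ctr A = A /\ forall x : 'cV[C]_n, 0 <= (ctr x *m A *m x) 0 0.

Definition qf n (h : 'cV[C]_n) (A : 'M[C]_n) : C := (ctr h *m A *m h) 0 0.

Definition Phi N (v : 'cV[C]_N) : 'M[C]_N := diag_mx v^T.

(* effective channel h_1 = h_d + G^H Phi^H h_r *)
Definition heff M N (G : 'M[C]_(N, M)) (hd : 'cV[C]_M) (hr : 'cV[C]_N)
  (v : 'cV[C]_N) : 'cV[C]_M := hd + ctr G *m ctr (Phi v) *m hr.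

(* f(X) = tr((G X G^H)^{-1}) if invertible, +oo (None) otherwise *)
Definition fobj M N (G : 'M[C]_(N, M)) (X : 'M[C]_M) : option C :=
  let Y := G *m X *m ctr G in
  if Y \in unitmx then Some (\tr (invmx Y)) else None.

Definition ext_le (a b : option C) : Prop :=
  match a, b with
  | _, None => True
  | None, Some _ => False
  | Some x, Some y => x <= y
  end.

Definition P11_feasible M (h : 'cV[C]_M) (Gamma sigma2 P0 : C)
  (w : 'cV[C]_M) (R0 : 'M[C]_M) : Prop :=
  psd R0 /\
  `|(ctr h *m w) 0 0| ^+ 2 / (qf h R0 + sigma2) >= Gamma /\
  (ctr w *m w) 0 0 + \tr R0 <= P0.

Definition P11_optimal M N (G : 'M[C]_(N, M)) (h : 'cV[C]_M)
  (Gamma sigma2 P0 : C) (w : 'cV[C]_M) (R0 : 'M[C]_M) : Prop :=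
  P11_feasible h Gamma sigma2 P0 w R0 /\
  forall w' R0', P11_feasible h Gamma sigma2 P0 w' R0' ->
    ext_le (fobj G (w *m ctr w + R0)) (fobj G (w' *m ctr w' + R0')).

Definition SDR12_feasible M (h : 'cV[C]_M) (Gamma sigma2 P0 : C)
  (W1 R0 : 'M[C]_M) : Prop :=
  let H1 := h *m ctr h in
  psd W1 /\ psd R0 /\
  (1 + Gamma^-1) * \tr (H1 *m W1) - \tr (H1 *m (W1 + R0)) >= sigma2 /\
  \tr W1 + \tr R0 <= P0.

Definition SDR12_optimal M N (G : 'M[C]_(N, M)) (h : 'cV[C]_M)
  (Gamma sigma2 P0 : C) (W1 R0 : 'M[C]_M) : Prop :=
  SDR12_feasible h Gamma sigma2 P0 W1 R0 /\
  forall W1' R0', SDR12_feasible h Gamma sigma2 P0 W1' R0' ->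
    ext_le (fobj G (W1 + R0)) (fobj G (W1' + R0')).

End Defs.

(* Let (W1, R0) be optimal for (SDR1.2) and X = W1 + R0.  The SINR constraint
   forces h^H X h >= Gamma sigma2 > 0, so the beamformer w = X h / sqrt(h^H X h)
   and the residual R = X - w w^H are defined.  By Cauchy-Schwarz for the
   semi-inner product of X, R is psd; moreover h^H R h = 0 and |h^H w|^2 =
   h^H X h, so (w, R) is feasible for (P1.1).  As w w^H + R = X, (w, R) attains
   the optimal value of (SDR1.2), which bounds (P1.1) from below since every
   (P1.1)-feasible (w', R') lifts to the (SDR1.2)-feasible (w' w'^H, R'). *)
From HB Require Import structures.
From mathcomp Require Import all_boot all_order all_algebra.
From mathcomp Require Import ring.
Import Order.TTheory GRing.Theory Num.Theory.
Local Open Scope ring_scope.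

Section Hermitian.
Set Implicit Arguments. Unset Strict Implicit.
Variable C : numClosedFieldType.

Lemma ctrE m n (A : 'M[C]_(m, n)) i j : ctr A i j = (A j i)^*.
Proof. by rewrite /ctr !mxE. Qed.

Lemma ctr_mul m n p (A : 'M[C]_(m, n)) (B : 'M[C]_(n, p)) :
  ctr (A *m B) = ctr B *m ctr A.
Proof. by rewrite /ctr map_mxM trmx_mul. Qed.

Lemma ctrD m n (A B : 'M[C]_(m, n)) : ctr (A + B) = ctr A + ctr B.
Proof. by apply/matrixP=> i j; rewrite !mxE rmorphD. Qed.

Lemma ctrN m n (A : 'M[C]_(m, n)) : ctr (- A) = - ctr A.
Proof. by apply/matrixP=> i j; rewrite !mxE rmorphN. Qed.

Lemma ctrZ m n a (A : 'M[C]_(m, n)) : ctr (a *: A) = a^* *: ctr A.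
Proof. by apply/matrixP=> i j; rewrite !mxE rmorphM. Qed.

Lemma ctrK m n (A : 'M[C]_(m, n)) : ctr (ctr A) = A.
Proof. by apply/matrixP=> i j; rewrite !ctrE conjCK. Qed.

Lemma inner_conj n (u x : 'cV[C]_n) : (ctr u *m x) 0 0 = ((ctr x *m u) 0 0)^*.
Proof. by rewrite -ctrE ctr_mul ctrK. Qed.

Definition sesq n (A : 'M[C]_n) (x y : 'cV[C]_n) : C := (ctr x *m A *m y) 0 0.

Lemma qfE n (h : 'cV[C]_n) A : qf h A = sesq A h h.
Proof. by []. Qed.

Lemma sesq_herm n (A : 'M[C]_n) x y : ctr A = A -> sesq A y x = (sesq A x y)^*.
Proof. by move=> hA; rewrite /sesq -ctrE !ctr_mul ctrK hA mulmxA. Qed.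

Lemma sesqDm n (A B : 'M[C]_n) x y : sesq (A + B) x y = sesq A x y + sesq B x y.
Proof. by rewrite /sesq mulmxDr mulmxDl mxE. Qed.

Lemma sesqBm n (A B : 'M[C]_n) x y : sesq (A - B) x y = sesq A x y - sesq B x y.
Proof.
have sesqNm : sesq (- B) x y = - sesq B x y by rewrite /sesq mulmxN mulNmx mxE.
by rewrite sesqDm sesqNm.
Qed.

Lemma sesqDl n (A : 'M[C]_n) x y z : sesq A (y + z) x = sesq A y x + sesq A z x.
Proof. by rewrite /sesq ctrD !mulmxDl mxE. Qed.

Lemma sesqDr n (A : 'M[C]_n) x y z : sesq A x (y + z) = sesq A x y + sesq A x z.
Proof. by rewrite /sesq mulmxDr mxE. Qed.

Lemma sesqZl n (A : 'M[C]_n) x a y : sesq A (a *: y) x = a^* * sesq A y x.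
Proof. by rewrite /sesq ctrZ -!scalemxAl !mxE. Qed.

Lemma sesqZr n (A : 'M[C]_n) x a y : sesq A x (a *: y) = a * sesq A x y.
Proof. by rewrite /sesq -scalemxAr mxE. Qed.

Lemma sesq_rank1 n (u x y : 'cV[C]_n) :
  sesq (u *m ctr u) x y = (ctr x *m u) 0 0 * (ctr u *m y) 0 0.
Proof. by rewrite /sesq mulmxA -(mulmxA _ (ctr u)) mxE big_ord1. Qed.

(* tr(u u^H W) = u^H W u, which turns the trace constraints of (SDR1.2)
   into quadratic forms in the channel. *)
Lemma mxtrace_rank1_mul n (u : 'cV[C]_n) (W : 'M[C]_n) :
  \tr (u *m ctr u *m W) = sesq W u u.
Proof. by rewrite -mulmxA mxtrace_mulC /sesq /mxtrace big_ord1. Qed.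

Lemma mxtrace_rank1 n (u : 'cV[C]_n) : \tr (u *m ctr u) = (ctr u *m u) 0 0.
Proof. by rewrite mxtrace_mulC /mxtrace big_ord1. Qed.

Lemma psdD n (A B : 'M[C]_n) : psd A -> psd B -> psd (A + B).
Proof.
move=> [hA pA] [hB pB]; split; first by rewrite ctrD hA hB.
by move=> x; rewrite -/(sesq _ x x) sesqDm addr_ge0 //; [apply: pA | apply: pB].
Qed.

Lemma psd_rank1 n (u : 'cV[C]_n) : psd (u *m ctr u).
Proof.
split; first by rewrite ctr_mul ctrK.
by move=> x; rewrite -/(sesq _ x x) sesq_rank1 (inner_conj u x) mul_conjC_ge0.
Qed.

Lemma psd_cauchy_schwarz n (X : 'M[C]_n) h x : psd X -> 0 < sesq X h h ->
  sesq X x h * (sesq X x h)^* <= sesq X x x * sesq X h h.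
Proof.
move=> [hX pX] b_gt0; set b := sesq X h h; set c := sesq X x h.
have := pX (b *: x + (- c^*) *: h).
rewrite -/(sesq X _ _) sesqDl !sesqZl !sesqDr !sesqZr.
rewrite (sesq_herm x h hX) -/c -/b rmorphN /= conjCK (geC0_conj (ltW b_gt0)).
move=> ge0; rewrite -subr_ge0 -(pmulr_rge0 _ b_gt0); apply: (le_trans ge0).
by rewrite le_eqVlt; apply/orP; left; apply/eqP; ring.
Qed.

(* Rank-one extraction: for psd X with h^H X h > 0, the beamformer
   w = X h / sqrt(h^H X h) splits X = w w^H + R with R psd and h^H R h = 0,
   while w alone captures the whole channel gain h^H X h. *)
Section RankOneExtraction.
Variables (n : nat) (X : 'M[C]_n) (h : 'cV[C]_n).

Definition beam : 'cV[C]_n := (sqrtC (qf h X))^-1 *: (X *m h).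
Definition residual : 'M[C]_n := X - beam *m ctr beam.

Hypotheses (psdX : psd X) (gain_gt0 : 0 < qf h X).

Let s := sqrtC (qf h X).
Let s_gt0 : 0 < s. Proof. by rewrite sqrtC_gt0. Qed.
Let s_sq : s * s = qf h X. Proof. by rewrite -expr2 sqrtCK. Qed.

Lemma beam_inner x : (ctr x *m beam) 0 0 = s^-1 * sesq X x h.
Proof. by rewrite /beam -scalemxAr mxE /sesq mulmxA. Qed.

Lemma beam_gain : (ctr h *m beam) 0 0 = s.
Proof. by rewrite beam_inner -qfE -s_sq mulKf ?gt_eqF. Qed.

Lemma residual_null : qf h residual = 0.
Proof.
rewrite qfE sesqBm sesq_rank1 (inner_conj beam h) beam_gain.
by rewrite (geC0_conj (ltW s_gt0)) s_sq subrr.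
Qed.

(* The residual is psd: x^H R x = x^H X x - |x^H X h|^2 / h^H X h >= 0. *)
Lemma residual_psd : psd residual.
Proof.
have [hX _] := psdX; split; first by rewrite /residual ctrD ctrN ctr_mul ctrK hX.
move=> x; rewrite -/(sesq _ x x) sesqBm sesq_rank1 (inner_conj beam x) !beam_inner.
have sinv_ge0 : 0 <= s^-1 by rewrite invr_ge0 ltW.
rewrite rmorphM /= (geC0_conj sinv_ge0) subr_ge0.
set c := sesq X x h.
have -> : s^-1 * c * (s^-1 * c^*) = (qf h X)^-1 * (c * c^*).
  by rewrite -s_sq invfM; ring.
rewrite -(ler_pM2l gain_gt0) mulVKf ?gt_eqF // [qf _ _ * _]mulrC qfE.
exact: psd_cauchy_schwarz.
Qed.

Lemma beam_power : (ctr beam *m beam) 0 0 + \tr residual = \tr X.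
Proof. by rewrite /residual linearB /= -mxtrace_rank1 addrC subrK. Qed.

Lemma beam_residualE : beam *m ctr beam + residual = X.
Proof. by rewrite /residual addrC subrK. Qed.

End RankOneExtraction.

Section Relaxation.
Variables (M : nat) (h : 'cV[C]_M) (Gamma sigma2 P0 : C).
Hypotheses (Gamma_gt0 : 0 < Gamma) (sigma2_gt0 : 0 < sigma2).

Lemma P11_feasible_SDR12 w R0 : P11_feasible h Gamma sigma2 P0 w R0 ->
  SDR12_feasible h Gamma sigma2 P0 (w *m ctr w) R0.
Proof.
move=> [psdR0 [sinr power]]; have [_ pR0] := psdR0.
split; first exact: psd_rank1.
split; first exact: psdR0.
split; last by rewrite mxtrace_rank1.
rewrite mulmxDr mxtraceD !mxtrace_rank1_mul sesq_rank1 (inner_conj w h).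
set d := (ctr h *m w) 0 0; set q := sesq R0 h h.
have noise_gt0 : 0 < q + sigma2 by rewrite ltr_wpDl //; apply: pR0.
move: sinr; rewrite qfE -/q -/d normCK ler_pdivlMr // => sinr.
have : q + sigma2 <= Gamma^-1 * (d * d^*).
  by rewrite -(ler_pM2l Gamma_gt0) mulVKf ?gt_eqF // mulrC.
rewrite -lerBrDl => le_sigma2; apply: (le_trans le_sigma2).
by rewrite le_eqVlt; apply/orP; left; apply/eqP; ring.
Qed.

Lemma SDR12_feasible_gain W1 R0 : SDR12_feasible h Gamma sigma2 P0 W1 R0 ->
  Gamma * sigma2 <= qf h (W1 + R0).
Proof.
move=> [_ [[_ pR0] [sinr _]]].
have b_ge0 : 0 <= sesq R0 h h by apply: pR0.
move: sinr; rewrite !mxtrace_rank1_mul sesqDm qfE sesqDm.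
set a := sesq W1 h h; set b := sesq R0 h h.
have -> : (1 + Gamma^-1) * a - (a + b) = Gamma^-1 * a - b by ring.
rewrite lerBrDr -(ler_pM2l Gamma_gt0) mulrDr mulVKf ?gt_eqF // => le_a.
apply: le_trans (le_trans le_a _); first by rewrite lerDl pmulr_rge0.
by rewrite lerDl.
Qed.

(* The rank-one extraction of an (SDR1.2)-feasible point is feasible for
   (P1.1): the full gain h^H (W1 + R0) h >= Gamma sigma2 goes to the beam. *)
Lemma SDR12_extract_feasible W1 R0 : SDR12_feasible h Gamma sigma2 P0 W1 R0 ->
  P11_feasible h Gamma sigma2 P0 (beam (W1 + R0) h) (residual (W1 + R0) h).
Proof.
move=> feas; have gain := SDR12_feasible_gain feas.
have [psdW1 [psdR0 [_ power]]] := feas.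
have psdX := psdD psdW1 psdR0.
have gain_gt0 : 0 < qf h (W1 + R0) by apply: lt_le_trans gain; rewrite mulr_gt0.
split; first exact: residual_psd.
split.
  have s_ge0 : 0 <= sqrtC (qf h (W1 + R0)) by rewrite sqrtC_ge0 ltW.
  by rewrite residual_null // add0r beam_gain // ger0_norm // sqrtCK ler_pdivlMr.
by rewrite beam_power // mxtraceD.
Qed.

End Relaxation.

End Hermitian.

Theorem proposition4 (C : numClosedFieldType) (M N : nat)
  (G : 'M[C]_(N, M)) (hd : 'cV[C]_M) (hr : 'cV[C]_N)
  (Gamma sigma2 P0 : C) (v : 'cV[C]_N) :
  (0 < M)%N -> (0 < N)%N ->
  0 < Gamma -> 0 < sigma2 -> 0 < P0 ->
  (forall n : 'I_N, `|v n 0| = 1) ->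
  (exists W1 R0 : 'M[C]_M,
     SDR12_optimal G (heff G hd hr v) Gamma sigma2 P0 W1 R0) ->
  exists (w : 'cV[C]_M) (R0 : 'M[C]_M),
    P11_optimal G (heff G hd hr v) Gamma sigma2 P0 w R0 /\
    qf (heff G hd hr v) R0 = 0.
Proof.
move=> _ _ Gamma_gt0 sigma2_gt0 _ _ [W1 [R0 [feas opt]]].
set h := heff G hd hr v in feas opt *.
have gain_gt0 : 0 < qf h (W1 + R0).
  by apply: lt_le_trans (SDR12_feasible_gain Gamma_gt0 feas); rewrite mulr_gt0.
exists (beam (W1 + R0) h), (residual (W1 + R0) h).
split; last exact: residual_null.
split; first exact: SDR12_extract_feasible.
move=> w' R' feas'; rewrite beam_residualE.
exact/opt/P11_feasible_SDR12.
Qed.
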